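(* Let $K$ be a field. (i) If $\alpha=\beta+1$ is a countable non-limit ordinal, then there is a $K$-algebra isomorphism $B_{\alpha,1}\cong B_{\beta,1}\boxplus B_{\alpha,1}$. (ii) If $\gamma\ge0$ is a countable ordinal and $\alpha=\gamma+n$ for some $0<n<\omega$, then there is a $K$-algebra isomorphism $B_{\alpha,1}\cong B_{\gamma,1}\boxplus B_{\alpha,1}$. (iii) If $\alpha$ is a countable limit ordinal and $\beta<\alpha$, then there is a $K$-algebra isomorphism $B_{\alpha,1}\cong B_{\beta,1}\boxplus B_{\alpha,1}$.
   Context: For a sequence $\mathcal R=(R_i\mid i\in A)$ of $K$-algebras indexed by an infinite set $A$, $R(A,K,\mathcal R)$ is the $K$-subalgebra $\bigoplus_{i\in A}R_i\oplus1_P\cdot K$ of $P=\prod_{i\in A}R_i$; $\boxplus$ is ring direct product. Define $B_{0,1}=K$; $B_{\beta+1,1}=R(\aleph_0,K,\mathcal R)$ with $\mathcal R$ the constant sequence $R_m=B_{\beta,1}$ ($m<\aleph_0$); for limit $\alpha$, $B_{\alpha,1}=R(\alpha,K,(B_{\beta,1}\mid\beta<\alpha))$. *)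

From HB Require Import structures.
From mathcomp Require Import all_boot all_algebra.
From Stdlib Require Import ClassicalEpsilon List.
Set Implicit Arguments. Unset Strict Implicit. Unset Printing Implicit Defensive.
Import GRing.Theory.
Local Open Scope ring_scope.

Section Models.
Variable K : fieldType.

(* A K-algebra given concretely as a subset [amem] of K^carrier
   (with pointwise operations).  All algebras built below are
   subalgebras of such function algebras. *)
Record Model : Type := { carrier : Type; amem : (carrier -> K) -> Prop }.
Arguments amem : clear implicits.

Definition Kalg : Model := {| carrier := unit; amem := fun _ => True |}.

(* R(I,K,F) = (\bigoplus_i F i) + K.1  inside  \prod_i F i ;
   an element of \prod_i F i is encoded as a function on the disjoint union
   of the carriers. f is in the subalgebra iff every component is in F i and
   f - c.1 has finite support for some c in K. *)
Definition Rsum (I : Type) (F : I -> Model) : Model :=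
  {| carrier := {i : I & carrier (F i)};
     amem := fun f =>
       (forall i, amem (F i) (fun x => f (existT _ i x))) /\
       exists c : K, exists s : list I,
         forall i, (exists x, f (existT _ i x) <> c) -> List.In i s |}.

Definition boxplus (M N : Model) : Model :=
  {| carrier := (carrier M + carrier N)%type;
     amem := fun f => amem M (fun x => f (inl x)) /\ amem N (fun y => f (inr y)) |}.

Definition alg_iso (M N : Model) : Prop :=
  exists phi : (carrier M -> K) -> (carrier N -> K),
    [/\ (forall f, amem M f -> amem N (phi f)),
        (forall g, amem N g -> exists2 f, amem M f & phi f = g),
        (forall f g, amem M f -> amem M g -> phi f = phi g -> f = g) &
     [/\ 
        phi (fun _ => 1) = (fun _ => 1),
        (forall f g, amem M f -> amem M g ->
           phi (fun x => f x + g x) = (fun y => phi f y + phi g y)),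
        (forall f g, amem M f -> amem M g ->
           phi (fun x => f x * g x) = (fun y => phi f y * phi g y)) &
        (forall (c : K) f, amem M f ->
           phi (fun x => c * f x) = (fun y => c * phi f y))]].

(* Ordinals are represented as elements of a well-ordered type (T, ltT):
   the element w stands for the ordinal type of {v | ltT v w}. *)
Definition issucc (T : Type) (ltT : T -> T -> Prop) (v w : T) : Prop :=
  ltT v w /\ ~ (exists u, ltT v u /\ ltT u w).

Fixpoint nsucc (T : Type) (ltT : T -> T -> Prop) (n : nat) (g w : T) : Prop :=
  match n with
  | 0 => g = w
  | n'.+1 => exists v, nsucc ltT n' g v /\ issucc ltT v w
  end.

Definition is_limit (T : Type) (ltT : T -> T -> Prop) (w : T) : Prop :=
  (exists v, ltT v w) /\ (forall v, ~ issucc ltT v w).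

Definition Bstep (T : Type) (ltT : T -> T -> Prop) (w : T)
  (rec : forall v, ltT v w -> Model) : Model :=
  match excluded_middle_informative (exists v, issucc ltT v w) with
  | left H =>
      let (v, Hv) := constructive_indefinite_description _ H in
      Rsum (fun _ : nat => rec v (proj1 Hv))
  | right _ =>
      match excluded_middle_informative (exists v, ltT v w) with
      | left _ => Rsum (fun p : {v | ltT v w} => rec (proj1_sig p) (proj2_sig p))
      | right _ => Kalg
      end
  end.

Definition B (T : Type) (ltT : T -> T -> Prop) (wf : well_founded ltT) : T -> Model :=
  Fix wf (fun _ => Model) (@Bstep T ltT).

End Models.
Arguments amem {K} m _.

From mathcomp Require Import all_boot all_algebra.
From Stdlib Require Import ClassicalEpsilon Classical FunctionalExtensionality List Eqdep_dec.
Set Implicit Arguments. Unset Strict Implicit. Unset Printing Implicit Defensive.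
Local Open Scope ring_scope.

(* Shifting indices by one gives
   R(N, M) ≅ M ⊞ R(N, M).  And if one factor F i0 of R(I, F) absorbs S,
   i.e. F i0 ≅ S ⊞ F i0, then so does R(I, F): apply that isomorphism in the
   coordinate i0 only, which changes no support outside i0.  Now
   B_{b+1} = R(N, B_b) gives (i); (ii) follows by induction on n, absorbing
   B_g into the coordinate 0 of B_{g+n+1} = R(N, B_{g+n}); and for a limit a
   and b < a, the successor b+1 < a is a coordinate of B_a = R(a, (B_v)_v)
   that absorbs B_b by (i). *)

Section Fibers.
Variables (I : Type) (C : I -> Type).

Definition proj_fiber (i0 : I) (p : {i : I & C i}) : option (C i0) :=
  let: existT i x := p in
  match excluded_middle_informative (i = i0) with
  | left e => Some (eq_rect i C x i0 e)
  | right _ => None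
  end.

Lemma proj_fiber_in i0 (y : C i0) : proj_fiber i0 (existT C i0 y) = Some y.
Proof.
rewrite /proj_fiber; case: excluded_middle_informative => [e|//].
by rewrite (UIP_dec (fun x y => excluded_middle_informative (x = y)) e erefl).
Qed.

Lemma proj_fiber_out i0 i (x : C i) : i <> i0 -> proj_fiber i0 (existT C i x) = None.
Proof. by rewrite /proj_fiber; case: excluded_middle_informative. Qed.

Lemma proj_fiber_Some i0 p (y : C i0) : proj_fiber i0 p = Some y -> p = existT C i0 y.
Proof.
by case: p => i x; rewrite /proj_fiber; case: excluded_middle_informative => // e [<-]; subst.
Qed.

End Fibers.

Arguments proj_fiber : simpl never.

Lemma comap_alg_iso (K : fieldType) (M N : Model K) (sigma : carrier N -> carrier M)
    (tau : carrier M -> carrier N) :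
  cancel sigma tau -> cancel tau sigma ->
  (forall f, amem M f -> amem N (f \o sigma)) ->
  (forall g, amem N g -> amem M (g \o tau)) ->
  alg_iso M N.
Proof.
move=> sigmaK tauK memN memM; exists (fun f => f \o sigma); split => //.
- move=> g Ng; exists (g \o tau); first exact: memM.
  by apply: functional_extensionality => z /=; rewrite sigmaK.
- move=> f g _ _ fg; apply: functional_extensionality => x.
  by rewrite -(tauK x); exact: (congr1 (fun h => h (tau x)) fg).
Qed.

Section RsumShift.
Variables (K : fieldType) (M : Model K).

Local Notation C := (fun _ : nat => carrier M).

Definition shift_index (z : carrier M + {n : nat & C n}) : {n : nat & C n} :=
  match z with
  | inl x => existT C 0%N x
  | inr (existT n x) => existT C n.+1 x
  end.

Definition unshift_index (p : {n : nat & C n}) : carrier M + {n : nat & C n} :=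
  match p with
  | existT 0%N x => inl x
  | existT n.+1 x => inr (existT C n x)
  end.

Lemma shift_indexK : cancel shift_index unshift_index.
Proof. by case=> [x|[n x]]. Qed.

Lemma unshift_indexK : cancel unshift_index shift_index.
Proof. by case=> -[|n] x. Qed.

Lemma rsum_shift :
  alg_iso (Rsum (fun _ : nat => M)) (boxplus M (Rsum (fun _ : nat => M))).
Proof.
apply: comap_alg_iso; [exact: shift_indexK | exact: unshift_indexK | |].
- move=> f [fib [c [s supp]]]; split; first exact: (fib 0%N).
  split; first by move=> n; exact: (fib n.+1).
  exists c, (map Nat.pred s) => n nconst.
  exact: (in_map Nat.pred s n.+1 (supp n.+1 nconst)).
- move=> h [fib0 [fib [c [s supp]]]]; split; first by case=> [|n]; [exact: fib0 | exact: fib].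
  exists c, (0%N :: map succn s) => -[|n] nconst; first by left.
  by right; apply: in_map; exact: supp.
Qed.

End RsumShift.

Section RsumAbsorb.
Variables (K : fieldType) (I : Type) (F : I -> Model K) (S : Model K) (i0 : I).
Variable phi : (carrier (F i0) -> K) -> (carrier (boxplus S (F i0)) -> K).
Hypotheses (phi_mem : forall f, amem (F i0) f -> amem (boxplus S (F i0)) (phi f))
  (phi_onto : forall g, amem (boxplus S (F i0)) g -> exists2 f, amem (F i0) f & phi f = g)
  (phi_inj : forall f g, amem (F i0) f -> amem (F i0) g -> phi f = phi g -> f = g)
  (phi1 : phi (fun _ => 1) = (fun _ => 1))
  (phiD : forall f g, amem (F i0) f -> amem (F i0) g ->
     phi (fun x => f x + g x) = (fun y => phi f y + phi g y))
  (phiM : forall f g, amem (F i0) f -> amem (F i0) g ->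
     phi (fun x => f x * g x) = (fun y => phi f y * phi g y))
  (phiZ : forall (c : K) f, amem (F i0) f -> phi (fun x => c * f x) = (fun y => c * phi f y)).

Local Notation C := (fun i => carrier (F i)).
Local Notation Sigma := {i : I & C i}.

Definition almost_const (f : Sigma -> K) : Prop :=
  exists c : K, exists s : list I,
    forall i, (exists x, f (existT C i x) <> c) -> In i s.

Lemma almost_const_agree f g :
  (forall i, i <> i0 -> forall x, f (existT C i x) = g (existT C i x)) ->
  almost_const f -> almost_const g.
Proof.
move=> fg [c [s supp]]; exists c, (i0 :: s) => i [x gx].
have [->|ne] := classic (i = i0); first by left.
by right; apply: supp; exists x; rewrite fg.
Qed.

Definition at_i0 (f : Sigma -> K) : C i0 -> K := fun x => f (existT C i0 x).

Definition route (z : carrier S + Sigma) : carrier (boxplus S (F i0)) + Sigma :=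
  match z with
  | inl s => inl (inl s)
  | inr p => if proj_fiber i0 p is Some y then inl (inr y) else inr p
  end.

Definition absorb (f : Sigma -> K) (z : carrier S + Sigma) : K :=
  match route z with inl w => phi (at_i0 f) w | inr p => f p end.

Definition patch (f0 : C i0 -> K) (g : Sigma -> K) (p : Sigma) : K :=
  if proj_fiber i0 p is Some y then f0 y else g p.

Lemma absorb_in f y : absorb f (inr (existT C i0 y)) = phi (at_i0 f) (inr y).
Proof. by rewrite /absorb /= proj_fiber_in. Qed.

Lemma absorb_out f i x : i <> i0 -> absorb f (inr (existT C i x)) = f (existT C i x).
Proof. by move=> ne; rewrite /absorb /= proj_fiber_out. Qed.

Lemma at_i0_patch f0 g : at_i0 (patch f0 g) = f0.
Proof. by apply: functional_extensionality => y; rewrite /at_i0 /patch proj_fiber_in. Qed.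

Lemma patch_out f0 g i x : i <> i0 -> patch f0 g (existT C i x) = g (existT C i x).
Proof. by move=> ne; rewrite /patch proj_fiber_out. Qed.

Lemma absorb_mem f : amem (Rsum F) f -> amem (boxplus S (Rsum F)) (absorb f).
Proof.
move=> [fib supp]; have [memS memF] := phi_mem (fib i0).
split; first exact: memS.
split; last by apply: (@almost_const_agree f (fun p => absorb f (inr p))) supp => i ne x;
  rewrite absorb_out.
move=> i; have [->|ne] := classic (i = i0).
  by rewrite (functional_extensionality _ _ (absorb_in f)).
rewrite (functional_extensionality _ _ (fun x => absorb_out f x ne)).
exact: fib.
Qed.

Lemma absorb_onto h : amem (boxplus S (Rsum F)) h -> exists2 f, amem (Rsum F) f & absorb f = h.
Proof.
move=> [memS [fib supp]].
pose k (w : carrier (boxplus S (F i0))) :=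
  match w with inl x => h (inl x) | inr y => h (inr (existT C i0 y)) end.
have [f0 memf0 phif0] := phi_onto (conj memS (fib i0) : amem (boxplus S (F i0)) k).
exists (patch f0 (fun p => h (inr p))).
  split; last first.
    by apply: (@almost_const_agree (fun p => h (inr p))) supp => i ne x; rewrite patch_out.
  move=> i; have [->|ne] := classic (i = i0).
    by change (amem (F i0) (at_i0 (patch f0 (fun p => h (inr p))))); rewrite at_i0_patch.
  rewrite (functional_extensionality _ _ (fun x => patch_out f0 _ x ne)).
  exact: fib.
apply: functional_extensionality => -[x|p]; rewrite /absorb /= at_i0_patch phif0 //.
case E: (proj_fiber i0 p) => [y|].
  by rewrite (proj_fiber_Some (C := C) E).
by rewrite /patch E.
Qed.

Lemma absorb_inj f g : amem (Rsum F) f -> amem (Rsum F) g -> absorb f = absorb g -> f = g.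
Proof.
move=> [fib _] [gib _] fg.
have fg0 : at_i0 f = at_i0 g.
  apply: phi_inj; [exact: fib | exact: gib |].
  apply: functional_extensionality => -[x|y].
    exact: (congr1 (fun h => h (inl x)) fg).
  by have := congr1 (fun h => h (inr (existT C i0 y))) fg; rewrite !absorb_in.
apply: functional_extensionality => p.
case E: (proj_fiber i0 p) => [y|].
  by rewrite (proj_fiber_Some (C := C) E); exact: (congr1 (fun h => h y) fg0).
by have := congr1 (fun h => h (inr p)) fg; rewrite /absorb /= E.
Qed.

Lemma rsum_absorb_iso : alg_iso (Rsum F) (boxplus S (Rsum F)).
Proof.
exists absorb; split; [exact: absorb_mem | exact: absorb_onto | exact: absorb_inj |].
split.
- by apply: functional_extensionality => z; rewrite /absorb; case: route => //; rewrite phi1.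
- move=> f g [fib _] [gib _]; apply: functional_extensionality => z.
  by rewrite /absorb; case: route => // w; rewrite (phiD (fib i0) (gib i0)).
- move=> f g [fib _] [gib _]; apply: functional_extensionality => z.
  by rewrite /absorb; case: route => // w; rewrite (phiM (fib i0) (gib i0)).
- move=> c f [fib _]; apply: functional_extensionality => z.
  by rewrite /absorb; case: route => // w; rewrite (phiZ c (fib i0)).
Qed.

End RsumAbsorb.

Lemma rsum_absorb (K : fieldType) (I : Type) (F : I -> Model K) (S : Model K) (i0 : I) :
  alg_iso (F i0) (boxplus S (F i0)) -> alg_iso (Rsum F) (boxplus S (Rsum F)).
Proof.
case=> phi [phi_mem phi_onto phi_inj [phi1 phiD phiM phiZ]].
exact: (rsum_absorb_iso phi_mem phi_onto phi_inj phi1 phiD phiM phiZ).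
Qed.

Section Ordinals.
Variables (K : fieldType) (T : Type) (ltT : T -> T -> Prop) (wf : well_founded ltT).
Hypothesis ltT_total : forall x y, ltT x y \/ x = y \/ ltT y x.

Local Notation B := (B K wf).

Lemma B_unfold a : B a = Bstep (fun v (_ : ltT v a) => B v).
Proof.
rewrite /B; apply: Fix_eq => x f g fg; congr Bstep.
by apply: functional_extensionality_dep => y; apply: functional_extensionality_dep.
Qed.

Lemma issucc_unique v b a : issucc ltT v a -> issucc ltT b a -> v = b.
Proof.
move=> [va noV] [ba noB]; case: (ltT_total v b) => [vb|[//|bv]].
  by case: noV; exists b.
by case: noB; exists v.
Qed.

Lemma B_succ b a : issucc ltT b a -> B a = Rsum (fun _ : nat => B b).
Proof.
move=> ba; rewrite B_unfold /Bstep.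
case: excluded_middle_informative => [succ_a|]; last by case; exists b.
by case: constructive_indefinite_description => v va /=; rewrite (issucc_unique va ba).
Qed.

Lemma B_limit a : is_limit ltT a -> B a = Rsum (fun p : {v | ltT v a} => B (sval p)).
Proof.
move=> [below noSucc]; rewrite B_unfold /Bstep.
case: excluded_middle_informative => [[v va]|_]; first by case: (noSucc v).
by case: excluded_middle_informative.
Qed.

Lemma B_succ_iso b a : issucc ltT b a -> alg_iso (B a) (boxplus (B b) (B a)).
Proof. by move=> ba; rewrite (B_succ ba); exact: rsum_shift. Qed.

Lemma B_nsucc_iso n g a : (0 < n)%N -> nsucc ltT n g a -> alg_iso (B a) (boxplus (B g) (B a)).
Proof.
elim: n a => [//|[|n] IH] a _ /=; first by case=> v [-> va]; exact: B_succ_iso.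
case=> v [gv va]; rewrite (B_succ va).
exact: (@rsum_absorb K nat (fun _ => B v) (B g) 0%N (IH v isT gv)).
Qed.

Lemma wf_exists_min (P : T -> Prop) :
  (exists x, P x) -> exists m, P m /\ forall y, P y -> ~ ltT y m.
Proof.
move=> [x Px]; apply: NNPP => noMin; move: Px; elim: (wf x) => y _ IH Py.
by apply: noMin; exists y; split=> // z Pz zy; exact: IH zy Pz.
Qed.

Hypothesis ltT_trans : forall x y z, ltT x y -> ltT y z -> ltT x z.

Lemma limit_succ_below a b : is_limit ltT a -> ltT b a -> exists2 s, issucc ltT b s & ltT s a.
Proof.
move=> [_ noSucc] ba.
have [|s [[bs sa] sMin]] := @wf_exists_min (fun u => ltT b u /\ ltT u a).
  by apply: NNPP => noBetween; apply: (noSucc b); split.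
exists s => //; split=> // -[u [bu us]].
exact: sMin u (conj bu (ltT_trans us sa)) us.
Qed.

Lemma B_limit_iso a b : is_limit ltT a -> ltT b a -> alg_iso (B a) (boxplus (B b) (B a)).
Proof.
move=> lim_a ba; have [s bs sa] := limit_succ_below lim_a ba.
rewrite (B_limit lim_a).
exact: (@rsum_absorb K _ (fun p : {v | ltT v a} => B (sval p)) (B b) (exist _ s sa)
          (B_succ_iso bs)).
Qed.

End Ordinals.

Theorem lemma6p9 (K : fieldType) (T : Type) (ltT : T -> T -> Prop)
  (wf : well_founded ltT)
  (ltT_trans : forall x y z, ltT x y -> ltT y z -> ltT x z)
  (ltT_total : forall x y, ltT x y \/ x = y \/ ltT y x)
  (T_countable : exists f : T -> nat, forall x y, f x = f y -> x = y) :
  (forall b a : T, issucc ltT b a ->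
     alg_iso (B K wf a) (boxplus (B K wf b) (B K wf a))) /\
  (forall (n : nat) (g a : T), (0 < n)%N -> nsucc ltT n g a ->
     alg_iso (B K wf a) (boxplus (B K wf g) (B K wf a))) /\
  (forall a b : T, is_limit ltT a -> ltT b a ->
     alg_iso (B K wf a) (boxplus (B K wf b) (B K wf a))).
Proof.
split; first exact: B_succ_iso.
split; first exact: B_nsucc_iso.
exact: B_limit_iso.
Qed.
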